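(* Let $U$ be a finite universe of $n$ pages, and let $C^0_0=\emptyset$ and $C^1_0,\dots,C^n_0\subseteq U$ be initial configurations with $|C^m_0|=m$ and $C^{m}_0\subset C^{m+1}_0$ for all $0\le m<n$. Then for every request sequence $\sigma$ over $U$, every time $t\ge 0$ and every $1\le m\le n$, we have $C^{m-1}_t(\sigma)\subset C^m_t(\sigma)$.
   Context: Unweighted paging over a finite universe $U$ of $n$ pages with request sequence $\sigma=(\sigma_1,\sigma_2,\dots)$. Fix a total order on $U$ used for tie-breaking. For a page $p$ and time $t$, its next-request time after $t$ is $\min\{s>t:\sigma_s=p\}$ ($=\infty$ if there is none); page $p$ is ''farther in the future'' than $p'$ at time $t$ if its next-request time is larger, or equal and $p$ comes later in the fixed order. For $1\le m\le n$, $\mathrm{FiF}^m$ (Belady's Farthest-in-Future algorithm with cache size $m$) starts from configuration $C^m_0$ with $|C^m_0|=m$; on request $\sigma_t$, if $\sigma_t$ is in its cache it does nothing, and otherwise it loads $\sigma_t$ and evicts the page of its current cache that is farthest in the future (as of time $t-1$, i.e. among next-request times after $t-1$ excluding the current request page which is being loaded). $C^m_t(\sigma)$ denotes the cache of $\mathrm{FiF}^m$ after serving $\sigma_1,\dots,\sigma_t$, and $C^0_t=\emptyset$ for all $t$. *)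

From mathcomp Require Import all_boot.
Set Implicit Arguments. Unset Strict Implicit. Unset Printing Implicit Defensive.

Section FiF.
Variable U : finType.
(* the fixed total order used for tie-breaking: p < p' iff ord p < ord p'
   (ord is assumed injective in the theorem) *)
Variable ord : U -> nat.
(* the request sequence sigma = (sigma_1, ..., sigma_|s|), sigma_i = nth s (i-1) *)
Variable s : seq U.

(* next-request time of p after time t, i.e. min {u > t | sigma_u = p};
   "infinity" (no further request) is encoded as size s + 1, which exceeds
   every genuine request time.  Only used with t <= size s. *)
Definition next_req (t : nat) (p : U) : nat := t + 1 + index p (drop t s).

Definition farther (t : nat) (p p' : U) : bool :=
  (next_req t p' < next_req t p) ||
  ((next_req t p == next_req t p') && (ord p' < ord p)).

Definition farthest (t : nat) (C : {set U}) : option U :=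
  [pick q in C | [forall q' in C, (q' == q) || farther t q q']].

Definition fif_step (t : nat) (C : {set U}) : {set U} :=
  match onth s t.-1 with
  | None => C
  | Some p =>
      if p \in C then C else
      match farthest t.-1 C with
      | Some q => p |: (C :\ q)
      | None => p |: C
      end
  end.

Fixpoint fif_run (C0 : {set U}) (t : nat) : {set U} :=
  match t with
  | 0 => C0
  | t'.+1 => fif_step t'.+1 (fif_run C0 t')
  end.

Definition cache (init : nat -> {set U}) (m t : nat) : {set U} :=
  if m is 0 then set0 else fif_run (init m) t.

End FiF.

From mathcomp Require Import all_boot.
From mathcomp Require Import zify.
Set Implicit Arguments.

(* Since the tie-breaking order is injective, "farther in the future at time
   t" is the strict order induced by the injective numerical key
     key t q = next_req t q * M + ord q      (M bounds every ord q),
   i.e. lexicographic comparison of (next-request time, order).  Hence every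
   nonempty cache has a unique farthest page, namely its key-maximum.

   From this we get the two facts about a single FiF step that drive the
   theorem: it preserves the size of a nonempty cache, and it is monotone
   w.r.t. inclusion (if A is contained in B, the page evicted from B is either
   outside A or is also the page evicted from A).  Iterating, FiF runs started
   from nested initial caches stay nested and keep their sizes, so the proper
   inclusions of the initial configurations persist at every time t
   (C^0_t is empty by definition, so the case m = 1 only needs that the
   cache of FiF^1 stays nonempty). *)

Lemma ltn_digit_lex M a b x y : x < M -> y < M ->
  (a * M + x < b * M + y) = (a < b) || (a == b) && (x < y).
Proof.
move=> xM yM; case: (ltngtP a b) => [ab|ba|<-] /=; last by rewrite ltn_add2l.
- have : a.+1 * M <= b * M by rewrite leq_mul2r ab orbT.
  rewrite mulSn; lia.
- have : b.+1 * M <= a * M by rewrite leq_mul2r ba orbT.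
  rewrite mulSn; lia.
Qed.

Section Farthest.
Variables (U : finType) (ord : U -> nat) (s : seq U).
Hypothesis ord_inj : injective ord.

Definition rank_bound : nat := (\max_(q : U) ord q).+1.

Lemma ord_lt_bound q : ord q < rank_bound.
Proof. by rewrite ltnS (leq_bigmax q). Qed.

Definition key (t : nat) (q : U) : nat := next_req s t q * rank_bound + ord q.

Lemma fartherE t p q : farther ord s t p q = (key t q < key t p).
Proof. by rewrite /key ltn_digit_lex ?ord_lt_bound // eq_sym. Qed.

(* keys of distinct pages differ, since their last digits ord p are distinct *)
Lemma key_inj t : injective (key t).
Proof.
move=> p q /(congr1 (modn^~ rank_bound)) /=.
by rewrite !modnMDl !modn_small ?ord_lt_bound // => /ord_inj.
Qed.

Definition is_farthest (t : nat) (C : {set U}) (q : U) : Prop :=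
  q \in C /\ {in C, forall q', key t q' <= key t q}.

Lemma farthestP t C : C != set0 ->
  exists2 q, farthest ord s t C = Some q & is_farthest t C q.
Proof.
move=> /set0Pn [q0 q0C]; rewrite /farthest.
case: pickP => [q /andP [qC /forall_inP qmax] | nomax].
  exists q => //; split=> // q' q'C.
  by case/orP: (qmax q' q'C) => [/eqP -> // | ]; rewrite fartherE => /ltnW.
case: (arg_maxnP (key t) q0C) => q qC qmax; exfalso.
move/negP: (nomax q); apply; apply/andP; split=> //; apply/forall_inP => q' q'C.
case: (eqVneq q' q) => //= neq.
by rewrite fartherE ltn_neqAle (inj_eq (@key_inj t)) neq; apply: qmax.
Qed.

Lemma is_farthest_uniq t C p q : is_farthest t C p -> is_farthest t C q -> p = q.
Proof.
move=> [pC pmax] [qC qmax]; apply: (@key_inj t); apply/eqP.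
by rewrite eqn_leq qmax // pmax.
Qed.

Lemma is_farthest_sub t (A B : {set U}) q :
  A \subset B -> q \in A -> is_farthest t B q -> is_farthest t A q.
Proof. by move=> /subsetP AB qA [_ qmax]; split=> // q' /AB; apply: qmax. Qed.

End Farthest.

Section Run.
Variables (U : finType) (ord : U -> nat) (s : seq U).
Hypothesis ord_inj : injective ord.

Lemma fif_step_miss t p (C : {set U}) :
  onth s t.-1 = Some p -> p \notin C -> 0 < #|C| ->
  exists2 q, is_farthest ord s t.-1 C q & fif_step ord s t C = p |: (C :\ q).
Proof.
rewrite card_gt0 /fif_step => -> /negbTE -> /(farthestP s ord_inj t.-1) [q -> qmax].
by exists q.
Qed.

Lemma fif_step_card t (C : {set U}) : 0 < #|C| -> #|fif_step ord s t C| = #|C|.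
Proof.
move=> C_gt0; case req: (onth s t.-1) => [p|]; last by rewrite /fif_step req.
case: (boolP (p \in C)) => pC; first by rewrite /fif_step req pC.
have [q [qC _] ->] := fif_step_miss t C req pC C_gt0.
by rewrite cardsU1 !inE (negbTE pC) andbF (cardsD1 q C) qC.
Qed.

Lemma fif_step_mono t (A B : {set U}) : 0 < #|A| -> A \subset B ->
  fif_step ord s t A \subset fif_step ord s t B.
Proof.
move=> A_gt0 AB; have AB' := subsetP AB.
case req: (onth s t.-1) => [p|]; last by rewrite /fif_step req.
case: (boolP (p \in A)) => pA; first by rewrite /fif_step req pA (AB' _ pA).
have [a amax ->] := fif_step_miss t A req pA A_gt0.
case: (boolP (p \in B)) => pB.
  rewrite /fif_step req pB subUset sub1set pB /=.
  exact: subset_trans (subsetDl A [set a]) AB.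
have B_gt0 : 0 < #|B| by apply: leq_trans A_gt0 (subset_leq_card AB).
have [b bmax ->] := fif_step_miss t B req pB B_gt0.
apply: setUS; apply/subsetP => x; rewrite !inE => /andP [xa xA].
rewrite AB' // andbT; apply: contraNneq xa => xb; rewrite xb in xA *.
by rewrite (is_farthest_uniq ord_inj (is_farthest_sub AB xA bmax) amax).
Qed.

Lemma fif_run_card (C : {set U}) t : 0 < #|C| -> #|fif_run ord s C t| = #|C|.
Proof. by move=> C_gt0; elim: t => //= t IH; rewrite fif_step_card IH. Qed.

Lemma fif_run_mono (A B : {set U}) t : 0 < #|A| -> A \subset B ->
  fif_run ord s A t \subset fif_run ord s B t.
Proof.
move=> A_gt0 AB; elim: t => //= t IH.
by apply: fif_step_mono IH; rewrite fif_run_card.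
Qed.

End Run.

Section Cache.
Variables (U : finType) (ord : U -> nat) (s : seq U) (init : nat -> {set U}).
Hypothesis ord_inj : injective ord.
Hypothesis init_card : forall m, m <= #|U| -> #|init m| = m.
Hypothesis init_chain : forall m, m < #|U| -> init m \proper init m.+1.

Lemma cache_card m t : m <= #|U| -> #|cache ord s init m t| = m.
Proof.
case: m => [|m] m_le; first by rewrite cards0.
by rewrite /= fif_run_card // init_card.
Qed.

Lemma cache_mono m t : m < #|U| -> cache ord s init m t \subset cache ord s init m.+1 t.
Proof.
case: m => [|m] m_lt; first exact: sub0set.
apply: fif_run_mono => //; first by rewrite init_card // ltnW.
exact: proper_sub (init_chain _ m_lt).
Qed.

End Cache.

Theorem lemma1 (U : finType) (ord : U -> nat) (ord_inj : injective ord)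
  (init : nat -> {set U})
  (init0 : init 0 = set0)
  (init_card : forall m, m <= #|U| -> #|init m| = m)
  (init_chain : forall m, m < #|U| -> init m \proper init m.+1)
  (s : seq U) (t m : nat) :
  1 <= m <= #|U| ->
  cache ord s init m.-1 t \proper cache ord s init m t.
Proof.
case: m => [//|m] /andP [_ m_lt].
have cache_m_sub := cache_mono s init ord_inj init_card init_chain _ t m_lt.
have card_m := cache_card s init ord_inj init_card _ t (ltnW m_lt).
have card_m1 := cache_card s init ord_inj init_card _ t m_lt.
by rewrite properEcard cache_m_sub card_m card_m1 ltnSn.
Qed.
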